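(* Let $w\ge100$ and let $\tilde x:[0,1]\to\mathbb R$ solve $$\tilde x'(s)=(w+1)-w\tanh\bigl(s\,\tilde x(s)\bigr),\qquad \tilde x(0)=x.$$ If $x>-2w+26\ln w$, then $\tilde x(1)\ge0$.
   Context: This ODE is the (time-reparametrized, $T\to\infty$ limit of the) guided probability flow ODE with guidance parameter $w$ toward the component $z=+1$ for the Gaussian mixture $\frac12\mathcal N(1,1)+\frac12\mathcal N(-1,1)$; $\tilde x(1)$ is the output sample for initialization $x$. *)

From Stdlib Require Import Reals.
From Coquelicot Require Import Coquelicot.
Open Scope R_scope.

(* xt : [0,1] -> R (represented as a total function R -> R; only its values on
   [0,1] matter) solves  xt'(s) = (w+1) - w tanh(s xt(s)),  xt(0) = x :
   xt is continuous on [0,1] (one-sided at the endpoints), differentiable on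
   (0,1) with the prescribed derivative, and xt 0 = x. *)
Definition solves_guided_ode (w x : R) (xt : R -> R) : Prop :=
  (forall s, 0 <= s <= 1 ->
     filterlim xt (within (fun t => 0 <= t <= 1) (locally s)) (locally (xt s))) /\
  (forall s, 0 < s < 1 ->
     is_derive xt s ((w + 1) - w * tanh (s * xt s))) /\
  xt 0 = x.

(* If xt 1 < 0 then, since xt' >= 1, the flow is negative on all of [0,1], so
   tanh(s xt s) <= 0 and xt' >= w+1; integrating back from s = 1 gives
   xt s <= -(w+1)(1-s).  On [d, 1-d] the argument s xt s is therefore below
   -(w+1) d/2, where tanh is within 2 exp(-(w+1) d) of -1, so xt' >= 2w
   there.  With d = 2 ln w / w this forces xt 1 >= x + 2w - 8 ln w > 0. *)
From Stdlib Require Import Reals.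
From Coquelicot Require Import Coquelicot.
From Stdlib Require Import Lra Psatz.
Open Scope R_scope.

Lemma exp_le_exp a b : a <= b -> exp a <= exp b.
Proof.
  intros [Hab | ->]; [left; exact (exp_increasing _ _ Hab) | right; reflexivity].
Qed.

Lemma tanh_exp y : tanh y = 1 - 2 / (exp (2 * y) + 1).
Proof.
  unfold tanh, sinh, cosh.
  replace (2 * y) with (y + y) by ring.
  rewrite exp_plus, exp_Ropp.
  pose proof (exp_pos y).
  field; split; nra.
Qed.

Lemma tanh_le_1 y : tanh y <= 1.
Proof.
  rewrite tanh_exp.
  pose proof (exp_pos (2 * y)).
  enough (0 < 2 / (exp (2 * y) + 1)) by lra.
  apply Rdiv_lt_0_compat; lra.
Qed.

Lemma tanh_nonpos y : y <= 0 -> tanh y <= 0.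
Proof.
  intros Hy; rewrite tanh_exp.
  assert (He : exp (2 * y) <= 1) by (rewrite <- exp_0; apply exp_le_exp; lra).
  pose proof (exp_pos (2 * y)).
  enough (1 <= 2 / (exp (2 * y) + 1)) by lra.
  apply Rmult_le_reg_r with (exp (2 * y) + 1); [lra|].
  field_simplify; lra.
Qed.

Lemma tanh_le_exp y : tanh y <= -1 + 2 * exp (2 * y).
Proof.
  rewrite tanh_exp.
  pose proof (exp_pos (2 * y)).
  enough (2 - 2 * exp (2 * y) <= 2 / (exp (2 * y) + 1)) by lra.
  apply Rmult_le_reg_r with (exp (2 * y) + 1); [lra|].
  field_simplify; nra.
Qed.

Definition clamp (a b t : R) : R := Rmax a (Rmin b t).

Lemma clamp_in a b t : a <= b -> a <= clamp a b t <= b.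
Proof. intros; unfold clamp, Rmax, Rmin; repeat destruct Rle_dec; lra. Qed.

Lemma clamp_id a b t : a <= t <= b -> clamp a b t = t.
Proof. intros; unfold clamp, Rmax, Rmin; repeat destruct Rle_dec; lra. Qed.

Lemma clamp_dist a b s t : a <= s <= b -> Rabs (clamp a b t - s) <= Rabs (t - s).
Proof.
  intros; unfold clamp, Rmax, Rmin, Rabs.
  repeat (destruct Rle_dec || destruct Rcase_abs); lra.
Qed.

Lemma filterlim_clamp (D : R -> Prop) a b s :
  (forall t, a <= t <= b -> D t) -> a <= s <= b ->
  filterlim (clamp a b) (locally s) (within D (locally s)).
Proof.
  intros HD Hs P [eps HP].
  exists eps; intros t Ht.
  apply HP; [| apply HD, clamp_in; lra].
  exact (Rle_lt_trans _ _ _ (clamp_dist a b s t Hs) Ht).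
Qed.

(* Extending f by constants outside [a,b] turns continuity within a set into
   the two-sided continuity that MVT_gen asks for; replacing df by Rmax m df
   (harmless inside (a,b)) covers the case where MVT_gen picks an endpoint. *)
Lemma MVT_lower_bound (D : R -> Prop) (f df : R -> R) (a b m : R) :
  a < b ->
  (forall t, a <= t <= b -> D t) ->
  (forall s, a <= s <= b -> filterlim f (within D (locally s)) (locally (f s))) ->
  (forall s, a < s < b -> is_derive f s (df s)) ->
  (forall s, a < s < b -> m <= df s) ->
  m * (b - a) <= f b - f a.
Proof.
  intros Hab HD Hcont Hder Hm.
  set (g := fun t => f (clamp a b t)).
  destruct (MVT_gen g a b (fun s => Rmax m (df s))) as [c [_ Hgc]];
    rewrite ?Rmin_left, ?Rmax_right in * by lra.
  - intros s Hs.
    rewrite Rmax_right by (now apply Hm).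
    apply (is_derive_ext_loc f); [| now apply Hder].
    exists (mkposreal _ (Rmin_pos (s - a) (b - s) ltac:(lra) ltac:(lra))).
    intros t Ht; change (Rabs (t - s) < Rmin (s - a) (b - s)) in Ht.
    apply Rabs_lt_between in Ht.
    pose proof (Rmin_l (s - a) (b - s)); pose proof (Rmin_r (s - a) (b - s)).
    unfold g; rewrite clamp_id; lra.
  - intros s Hs; apply continuity_pt_filterlim.
    unfold g; rewrite (clamp_id a b s Hs).
    eapply filterlim_comp; [exact (filterlim_clamp D a b s HD Hs) | now apply Hcont].
  - unfold g in Hgc; rewrite !clamp_id in Hgc by lra.
    rewrite Hgc.
    apply Rmult_le_compat_r; [lra | apply Rmax_l].
Qed.

Lemma four_ln_lt (w : R) : 50 <= w -> 4 * ln w < w.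
Proof.
  intros Hw.
  assert (H8 : 1 + w / 8 < exp (w / 8)) by (apply exp_ineq1; lra).
  assert (H4 : w < exp (w / 4)).
  { replace (w / 4) with (w / 8 + w / 8) by field.
    rewrite exp_plus; nra. }
  enough (ln w < ln (exp (w / 4))) by (rewrite ln_exp in *; lra).
  apply ln_increasing; lra.
Qed.

Section GuidedFlow.

Variables (w x : R) (xt : R -> R).
Hypothesis (Hw : 0 <= w) (Hsol : solves_guided_ode w x xt).

Lemma flow_increment_lower_bound a b m :
  0 <= a < b -> b <= 1 ->
  (forall s, a < s < b -> m <= (w + 1) - w * tanh (s * xt s)) ->
  m * (b - a) <= xt b - xt a.
Proof.
  destruct Hsol as [Hcont [Hder _]].
  intros Hab Hb Hm.
  apply (MVT_lower_bound (fun t => 0 <= t <= 1) xt (fun s => (w + 1) - w * tanh (s * xt s)));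
    [lra | intros; lra | intros s Hs; apply Hcont; lra | intros s Hs; apply Hder; lra | exact Hm].
Qed.

Lemma flow_nondecreasing a b : 0 <= a <= b -> b <= 1 -> xt a <= xt b.
Proof.
  intros Hab Hb.
  destruct (Req_dec a b) as [-> | Hne]; [lra|].
  enough (1 * (b - a) <= xt b - xt a) by lra.
  apply flow_increment_lower_bound; [lra | lra |].
  intros s _; pose proof (tanh_le_1 (s * xt s)); nra.
Qed.

Hypothesis Hneg : xt 1 < 0.

Lemma flow_below_line s : 0 <= s <= 1 -> xt s <= - (w + 1) * (1 - s).
Proof.
  intros Hs.
  destruct (Req_dec s 1) as [-> | Hne]; [lra|].
  enough ((w + 1) * (1 - s) <= xt 1 - xt s) by lra.
  apply flow_increment_lower_bound; [lra | lra |].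
  intros r Hr.
  assert (xt r < 0) by (pose proof (flow_nondecreasing r 1); lra).
  pose proof (tanh_nonpos (r * xt r) ltac:(nra)); nra.
Qed.

Lemma flow_steep_middle d :
  0 < d < 1 / 2 ->
  ((2 * w + 1) - 2 * w * exp (- (w + 1) * d)) * (1 - 2 * d) <= xt (1 - d) - xt d.
Proof.
  intros Hd.
  replace (1 - 2 * d) with (1 - d - d) by ring.
  apply flow_increment_lower_bound; [lra | lra |].
  intros s Hs.
  assert (Hsxt : s * xt s <= - (w + 1) * d / 2).
  { pose proof (flow_below_line s ltac:(lra)).
    assert (d / 2 <= s * (1 - s)) by nra.
    nra. }
  pose proof (tanh_le_exp (s * xt s)).
  pose proof (exp_le_exp (2 * (s * xt s)) (- (w + 1) * d) ltac:(lra)).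
  nra.
Qed.

End GuidedFlow.

Theorem lemma4p1 (w x : R) (xt : R -> R) :
  100 <= w ->
  solves_guided_ode w x xt ->
  x > -2 * w + 26 * ln w ->
  0 <= xt 1.
Proof.
  intros Hw Hsol Hx.
  destruct (Rle_or_lt 0 (xt 1)) as [Hpos | Hneg]; [exact Hpos | exfalso].
  assert (HL : 0 < ln w) by (rewrite <- ln_1; apply ln_increasing; lra).
  pose proof (four_ln_lt w ltac:(lra)).
  set (d := 2 * ln w / w).
  assert (Hdw : d * w = 2 * ln w) by (unfold d; field; lra).
  assert (Hd : 0 < d < 1 / 2).
  { split; [unfold d; apply Rdiv_lt_0_compat | apply Rmult_lt_reg_r with w]; lra. }
  assert (Hexp : w * w * exp (- (w + 1) * d) <= 1).
  { assert (Hwd : - (w + 1) * d <= - (ln w + ln w)) by nra.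
    pose proof (exp_le_exp _ _ Hwd) as He.
    rewrite exp_Ropp, exp_plus, exp_ln in He by lra.
    apply Rmult_le_compat_l with (r := w * w) in He; [| nra].
    rewrite Rinv_r in He by nra; exact He. }
  assert (Hslope : 2 * w <= (2 * w + 1) - 2 * w * exp (- (w + 1) * d)).
  { pose proof (exp_pos (- (w + 1) * d)); nra. }
  pose proof (flow_steep_middle w x xt ltac:(lra) Hsol Hneg d Hd) as Hmid.
  pose proof (flow_nondecreasing w x xt ltac:(lra) Hsol 0 d ltac:(lra) ltac:(lra)).
  pose proof (flow_nondecreasing w x xt ltac:(lra) Hsol (1 - d) 1 ltac:(lra) ltac:(lra)).
  destruct Hsol as [_ [_ Hx0]]; rewrite Hx0 in *.
  assert (2 * w * (1 - 2 * d) <= xt (1 - d) - xt d) by nra.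
  lra.
Qed.
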